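(* Let $f:\mathbb{R}^n\to\mathbb{R}$ have $L$-Lipschitz continuous gradient ($L>0$), i.e. $\|\nabla f(x)-\nabla f(y)\|\le L\|x-y\|$ for all $x,y$, and satisfy the Polyak–Łojasiewicz condition with constant $\mu>0$: $f(x)-f^*\le \frac{1}{2\mu}\|\nabla f(x)\|^2$ for all $x\in\mathbb{R}^n$, where $f^*=f(x_* )$ for a minimizer $x_*$ of $f$. Let $\Delta>0$ and suppose that at every point $x$ an inexact gradient $\widetilde{\nabla}f(x)$ is available with $\nabla f(x)=\widetilde{\nabla}f(x)+v(x)$, $\|v(x)\|\le\Delta$. Consider the gradient method $x_{k+1}=x_k-\frac{1}{L}\widetilde{\nabla}f(x_k)$ started from $x_0$, and suppose the stopping criterion $\|\widetilde{\nabla}f(x_k)\|\le\sqrt{6}\,\Delta$ is satisfied for the first time at iteration $k=N$. Then the output point $\widehat{x}=x_N$ satisfies $$f(\widehat{x})-f^*\le\frac{7\Delta^2}{\mu},$$ and the number of iterations satisfies $$N<\frac{2L}{\Delta^2}\bigl(f(x_0)-f^*\bigr).$$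
   Context: $\|\cdot\|$ is the Euclidean norm. ''Satisfied for the first time at iteration $N$'' means $\|\widetilde{\nabla}f(x_k)\|>\sqrt6\Delta$ for all $k=0,\dots,N-1$ and $\|\widetilde{\nabla}f(x_N)\|\le\sqrt6\Delta$. *)

From HB Require Import structures.
From mathcomp Require Import all_boot all_order all_algebra.
From mathcomp Require Import all_classical all_reals all_analysis.
Set Implicit Arguments. Unset Strict Implicit. Unset Printing Implicit Defensive.
Import Order.TTheory GRing.Theory Num.Theory.
Import numFieldNormedType.Exports.
Local Open Scope ring_scope.

(* Euclidean inner product and Euclidean norm on R^n (the library norm on
   matrices is the sup norm, so we define the Euclidean one explicitly). *)
Definition dotv {R : realType} {n : nat} (u v : 'rV[R]_n) : R :=
  \sum_(i < n) u ord0 i * v ord0 i.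

Definition enorm {R : realType} {n : nat} (v : 'rV[R]_n) : R :=
  Num.sqrt (dotv v v).

Definition is_gradient {R : realType} {n : nat}
  (f : 'rV[R]_n -> R) (g : 'rV[R]_n -> 'rV[R]_n) : Prop :=
  forall x, differentiable f x /\ forall h, 'd f x h = dotv (g x) h.

From HB Require Import structures.
From mathcomp Require Import all_boot all_order all_algebra.
From mathcomp Require Import all_classical all_reals all_analysis.
From mathcomp Require Import ring lra.
Import Order.TTheory GRing.Theory Num.Theory.
Import numFieldNormedType.Exports.
Local Open Scope ring_scope.

(* Write g for the inexact gradient and v = grad f - g for its error, |v| <= Delta.
   The descent lemma f (y + d) <= f y + <grad f y, d> + L/2 |d|^2 (mean value theorem
   along the segment plus the Lipschitz bound) for the step d = - g / L, together with
   Young's inequality 2 <g, v> >= - |g|^2 / 2 - 2 |v|^2, shows that one step decreases f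
   by at least (|g|^2 / 2 - 2 |v|^2) / (2 L), which exceeds Delta^2 / (2 L) as long as
   |g| > sqrt 6 Delta. Telescoping and f >= f* bound N. At the stopping point
   |grad f|^2 <= 2 (|g|^2 + |v|^2) <= 14 Delta^2, and the PL inequality turns this into
   the gap 7 Delta^2 / mu. *)

Lemma telescope_ltr (R : numDomainType) (a : nat -> R) (q : R) (N : nat) :
  (0 < N)%N -> (forall k, (k < N)%N -> q < a k - a k.+1) ->
  N%:R * q < a 0%N - a N.
Proof.
move=> N_gt0 step.
have -> : a 0%N - a N = \sum_(0 <= k < N) (a k - a k.+1).
  by rewrite -opprB -telescope_sumr // -sumrN; apply: eq_bigr => k _; rewrite opprB.
rewrite mulr_natl -[N in q *+ N]subn0 -sumr_const_nat.
by apply: ltr_sum_nat => // k /andP[_]; apply: step.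
Qed.

Section EuclideanInnerProduct.
Context {R : realType} {n : nat}.
Implicit Types (u v w : 'rV[R]_n) (a s : R).

Lemma dotvC u v : dotv u v = dotv v u.
Proof. by apply: eq_bigr => i _; rewrite mulrC. Qed.

Lemma dotvDl u v w : dotv (u + v) w = dotv u w + dotv v w.
Proof. by rewrite /dotv -big_split; apply: eq_bigr => i _; rewrite mxE mulrDl. Qed.

Lemma dotvZl a u v : dotv (a *: u) v = a * dotv u v.
Proof. by rewrite /dotv mulr_sumr; apply: eq_bigr => i _; rewrite mxE mulrA. Qed.

Lemma dotvDr u v w : dotv u (v + w) = dotv u v + dotv u w.
Proof. by rewrite dotvC dotvDl !(dotvC u). Qed.

Lemma dotvZr a u v : dotv u (a *: v) = a * dotv u v.
Proof. by rewrite dotvC dotvZl dotvC. Qed.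

Lemma dotvBl u v w : dotv (u - v) w = dotv u w - dotv v w.
Proof. by rewrite -scaleN1r dotvDl dotvZl mulN1r. Qed.

Lemma dotvv_ge0 u : 0 <= dotv u u.
Proof. by apply: sumr_ge0 => i _; rewrite -expr2 sqr_ge0. Qed.

Lemma enorm_sqr u : enorm u ^+ 2 = dotv u u.
Proof. by rewrite sqr_sqrtr // dotvv_ge0. Qed.

Lemma enorm_le_sqr u a : 0 <= a -> (enorm u <= a) = (dotv u u <= a ^+ 2).
Proof. by move=> a_ge0; rewrite -enorm_sqr ler_pXn2r // nnegrE sqrtr_ge0. Qed.

Lemma dotvDZ u v s :
  dotv (u + s *: v) (u + s *: v) = dotv u u + 2 * s * dotv u v + s ^+ 2 * dotv v v.
Proof.
rewrite !(dotvDl, dotvDr, dotvZl, dotvZr) (dotvC v u).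
by rewrite expr2 mulr2n mulrDl mul1r !mulrA; lra.
Qed.

Lemma dotv_sqrD_le u v : dotv (u + v) (u + v) <= 2 * (dotv u u + dotv v v).
Proof.
have := dotvDZ u v 1; have := dotvDZ u v (-1); rewrite scale1r scaleN1r.
have := dotvv_ge0 (u - v); have := dotvv_ge0 (u + v); lra.
Qed.

Lemma young_dotv_ge u v : - (dotv u u / 4 + dotv v v) <= dotv u v.
Proof. have := dotvDZ u v 2; have := dotvv_ge0 (u + 2 *: v); lra. Qed.

Lemma dotv_le_of_sqr_le u v a :
  0 < a -> dotv u u <= a ^+ 2 * dotv v v -> dotv u v <= a * dotv v v.
Proof.
move=> a_gt0 uu_le; have := dotvDZ u v (- a); have := dotvv_ge0 (u + - a *: v).
rewrite sqrrN; nra.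
Qed.

End EuclideanInnerProduct.

Section LipschitzGradient.
Local Open Scope classical_set_scope.
Context {R : realType} {n : nat} {f : 'rV[R]_n -> R} {gradf : 'rV[R]_n -> 'rV[R]_n}.
Context {L : R}.
Hypothesis f_grad : is_gradient f gradf.
Hypothesis L_gt0 : 0 < L.
Hypothesis gradf_lip : forall y z, enorm (gradf y - gradf z) <= L * enorm (y - z).

Lemma is_derive_line (y d : 'rV[R]_n) (t : R) :
  is_derive t 1 (fun s => f (y + s *: d)) (dotv (gradf (y + t *: d)) d).
Proof.
have [df dfE] := f_grad (y + t *: d).
have shiftE : (fun h => h^-1 *: (((fun s => f (y + s *: d)) \o shift t) (h *: 1)
                                - f (y + t *: d)))
  = (fun h => h^-1 *: ((f \o shift (y + t *: d)) (h *: d) - f (y + t *: d))).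
  by apply/funext => h /=; rewrite [h *: 1]mulr1 scalerDl addrCA.
split; first by rewrite /derivable shiftE; exact: diff_derivable.
by rewrite /derive shiftE -/(derive f _ d) deriveE // dfE.
Qed.

Lemma dotv_gradf_line_le (y d : 'rV[R]_n) (t : R) : 0 < t ->
  dotv (gradf (y + t *: d)) d - dotv (gradf y) d <= L * t * dotv d d.
Proof.
move=> t_gt0; rewrite -dotvBl; apply: dotv_le_of_sqr_le; first exact: mulr_gt0.
have := gradf_lip (y + t *: d) y.
rewrite [y + _ - y]addrC addKr enorm_le_sqr; last by rewrite mulr_ge0 ?sqrtr_ge0 ?ltW.
by rewrite exprMn enorm_sqr dotvZl dotvZr mulrA -expr2 exprMn mulrA.
Qed.

Lemma descent_lemma (y d : 'rV[R]_n) :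
  f (y + d) <= f y + dotv (gradf y) d + L / 2 * dotv d d.
Proof.
pose c := dotv (gradf y) d; pose D := dotv d d.
pose psi := (fun s => f (y + s *: d)) - c \*: id - (L / 2 * D) \*: (id * id).
have psi_derive (t : R) : is_derive t 1 psi (dotv (gradf (y + t *: d)) d - c - L * D * t).
  have line_derive := is_derive_line y d t; apply: is_derive_eq.
  by rewrite /GRing.scale /=; lra.
have psi_cont : {within `[0, 1], continuous psi}.
  by apply: derivable_within_continuous => t _; case: (psi_derive t).
have [t] := MVT ltr01 (fun t _ => psi_derive t) psi_cont.
rewrite in_itv /= => /andP[t_gt0 _] psi1.
have psiE s : psi s = f (y + s *: d) - c * s - L / 2 * D * (s * s) by [].
have := dotv_gradf_line_le y d t t_gt0; move: psi1.
by rewrite !psiE scale1r scale0r addr0 /c /D; lra.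
Qed.

Lemma inexact_gradient_step (y g : 'rV[R]_n) :
  f (y - L^-1 *: g) <=
  f y - (2 * L)^-1 * (dotv g g / 2 - 2 * dotv (gradf y - g) (gradf y - g)).
Proof.
set v := gradf y - g; have gradfE : gradf y = g + v by rewrite addrC subrK.
have := descent_lemma y (- (L^-1 *: g)).
rewrite -scaleNr !(dotvZr, dotvZl) gradfE dotvDl (dotvC v).
have -> : L / 2 * (- L^-1 * (- L^-1 * dotv g g)) = L^-1 / 2 * dotv g g.
  by field; rewrite gt_eqF.
rewrite invfM.
have Linv_ge0 : 0 <= L^-1 by rewrite invr_ge0 ltW.
have := ler_wpM2l Linv_ge0 (young_dotv_ge g v).
lra.
Qed.

Lemma inexact_step_decrease {y g : 'rV[R]_n} {Delta : R} :
  enorm (gradf y - g) <= Delta -> Num.sqrt 6 * Delta < enorm g ->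
  Delta ^+ 2 / (2 * L) < f y - f (y - L^-1 *: g).
Proof.
move=> noise big; have Delta_ge0 : 0 <= Delta := le_trans (sqrtr_ge0 _) noise.
move: noise big; rewrite enorm_le_sqr // ltNge enorm_le_sqr; last first.
  by rewrite mulr_ge0 ?sqrtr_ge0.
rewrite -ltNge exprMn sqr_sqrtr // => vv_le gg_gt.
have : Delta ^+ 2 < dotv g g / 2 - 2 * dotv (gradf y - g) (gradf y - g) by lra.
rewrite -(ltr_pM2l (_ : 0 < (2 * L)^-1)) ?invr_gt0 ?mulr_gt0 // mulrC.
have := inexact_gradient_step y g; lra.
Qed.
End LipschitzGradient.

Lemma pl_gap_le_inexact {R : realType} {n : nat}
    {f : 'rV[R]_n -> R} {gradf : 'rV[R]_n -> 'rV[R]_n} {fstar mu Delta b : R}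
    {y g : 'rV[R]_n} :
  0 < mu -> f y - fstar <= (2 * mu)^-1 * enorm (gradf y) ^+ 2 ->
  enorm (gradf y - g) <= Delta -> enorm g <= b ->
  f y - fstar <= (b ^+ 2 + Delta ^+ 2) / mu.
Proof.
move=> mu_gt0 PL noise g_le; apply: le_trans PL _.
have Delta_ge0 : 0 <= Delta := le_trans (sqrtr_ge0 _) noise.
have b_ge0 : 0 <= b := le_trans (sqrtr_ge0 _) g_le.
move: noise g_le; rewrite !enorm_le_sqr // enorm_sqr => vv_le gg_le.
have := dotv_sqrD_le g (gradf y - g); rewrite addrCA subrr addr0 => grad_le.
rewrite invfM mulrAC; apply: ler_wpM2r; first by rewrite invr_ge0 ltW.
lra.
Qed.

Theorem theorem2 (R : realType) (n : nat)
  (f : 'rV[R]_n -> R) (gradf : 'rV[R]_n -> 'rV[R]_n)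
  (L mu Delta : R) (xstar : 'rV[R]_n)
  (gt : 'rV[R]_n -> 'rV[R]_n) (x : nat -> 'rV[R]_n) (N : nat) :
  is_gradient f gradf ->
  0 < L ->
  (forall y z, enorm (gradf y - gradf z) <= L * enorm (y - z)) ->
  (forall y, f xstar <= f y) ->
  0 < mu ->
  (forall y, f y - f xstar <= (2 * mu)^-1 * enorm (gradf y) ^+ 2) ->
  0 < Delta ->
  (forall y, enorm (gradf y - gt y) <= Delta) ->
  (forall k, x k.+1 = x k - L^-1 *: gt (x k)) ->
  (forall k, (k < N)%N -> Num.sqrt 6 * Delta < enorm (gt (x k))) ->
  enorm (gt (x N)) <= Num.sqrt 6 * Delta ->
  f (x N) - f xstar <= 7 * Delta ^+ 2 / mu /\
  (N%:R < 2 * L / Delta ^+ 2 * (f (x 0%N) - f xstar)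
   \/ (N = 0%N /\ f (x 0%N) = f xstar)).
Proof.
move=> f_grad L_gt0 gradf_lip f_min mu_gt0 PL Delta_gt0 noise iterate before stop.
split.
  apply: le_trans (pl_gap_le_inexact mu_gt0 (PL (x N)) (noise (x N)) stop) _.
  by rewrite exprMn sqr_sqrtr //; lra.
have decrease k : (k < N)%N -> Delta ^+ 2 / (2 * L) < f (x k) - f (x k.+1).
  move=> kN; rewrite iterate.
  exact (inexact_step_decrease f_grad L_gt0 gradf_lip (noise _) (before k kN)).
have q_gt0 : 0 < Delta ^+ 2 / (2 * L) by rewrite divr_gt0 ?mulr_gt0 ?exprn_gt0.
have [N0 | N_gt0] := posnP N.
  subst N; have [f0E | f0_neq] := eqVneq (f (x 0%N)) (f xstar); first by right.
  left; rewrite mulr_gt0 ?divr_gt0 ?mulr_gt0 ?exprn_gt0 // subr_gt0.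
  by rewrite lt_def f0_neq f_min.
left; have := @telescope_ltr _ (fun k => f (x k)) _ _ N_gt0 decrease.
have -> : 2 * L / Delta ^+ 2 * (f (x 0%N) - f xstar)
        = (f (x 0%N) - f xstar) / (Delta ^+ 2 / (2 * L)).
  by field; rewrite !gt_eqF // exprn_gt0.
have := f_min (x N); rewrite ltr_pdivlMr //; lra.
Qed.
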